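(* Let $Q$ be a planar surface and let $U\in\mathrm{PC}(Q)$ be open in $Q$. Let $\mathcal I(U)=\{P\in\tilde{\mathcal M}:U\rightsquigarrow P\}$ (a closed subset of $\tilde{\mathcal M}$), and for $P\in\mathcal I(U)$ let $\iota_P:U\rightsquigarrow P$ be the (unique) immersion. Then the map $I_U:\mathcal I(U)\times U\to\tilde{\mathcal E}$, $I_U(P,q)=(P,\iota_P(q))$, is continuous, where $\mathcal I(U)$ carries the subspace topology from the immersive topology on $\tilde{\mathcal M}$ and $U$ the subspace topology from $Q$.
   Context: Let $\Delta$ be the open oriented topological $2$-disk with basepoint $x_0$. A pointed local homeomorphism is an orientation-preserving local homeomorphism $\phi:\Delta\to\mathbb R^2$ with $\phi(x_0)=\mathbf 0$. Two such maps $\phi,\psi$ are isomorphic if $\psi=\phi\circ h^{-1}$ for some orientation-preserving homeomorphism $h$ of $\Delta$ fixing $x_0$. The moduli space $\tilde{\mathcal M}$ is the set of isomorphism classes; an element $P\in\tilde{\mathcal M}$ is a planar surface, regarded as a topological open disk with basepoint $o_P$ and developing map $\mathrm{dev}_P:P\to\mathbb R^2$, an orientation-preserving local homeomorphism with $\mathrm{dev}_P(o_P)=\mathbf 0$. The set $\tilde{\mathcal E}$ is the set of pairs $(P,p)$ with $P$ a planar surface and $p\in P$; $\tilde\pi(P,p)=P$. $\mathrm{PC}(P)$ is the set of path-connected subsets of $P$ containing $o_P$. For $A\in\mathrm{PC}(P)$, $B\in\mathrm{PC}(Q)$, an immersion $\iota:A\rightsquigarrow B$ is a continuous map with $\iota(o_P)=o_Q$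 and $\mathrm{dev}_Q\circ\iota=\mathrm{dev}_P$ on $A$; it is unique if it exists. An embedding is an injective immersion ($\hookrightarrow$). $\overline{\mathrm{Disk}}(P)$: elements of $\mathrm{PC}(P)$ homeomorphic to a closed $2$-disk with $o_P$ in their interior; $\mathrm{Disk}(P)$: elements of $\mathrm{PC}(P)$ homeomorphic to an open $2$-disk. The immersive topology on $\tilde{\mathcal M}$ is the coarsest topology in which $\{Q:K\rightsquigarrow Q\}$ is open for every $K\in\overline{\mathrm{Disk}}(P)$ and $\{Q:U\not\hookrightarrow Q\}$ is open for every $U\in\mathrm{Disk}(P)$, over all planar surfaces $P$. For compact $K\in\mathrm{PC}(P)$ and open $U\subset K^\circ$, $\tilde{\mathcal E}_+(K,U)=\{(Q,q):\exists\,\iota:K\rightsquigarrow Q,\ q\in\iota(U)\}$. The immersive topology on $\tilde{\mathcal E}$ is the coarsest topology making $\tilde\pi$ continuous and every $\tilde{\mathcal E}_+(K,U)$ open. *)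

From Stdlib Require Import Reals Lra List.
Open Scope R_scope.

Definition R2 : Type := (R * R)%type.
Definition orig : R2 := (0, 0).
Definition dist2 (p q : R2) : R :=
  sqrt ((fst p - fst q) ^ 2 + (snd p - snd q) ^ 2).

Definition open2 (V : R2 -> Prop) : Prop :=
  forall x, V x -> exists r, 0 < r /\ forall y, dist2 x y < r -> V y.

Definition interior2 (K : R2 -> Prop) (x : R2) : Prop :=
  exists r, 0 < r /\ forall y, dist2 x y < r -> K y.

Definition cont_on (A : R2 -> Prop) (f : R2 -> R2) : Prop :=
  forall x, A x -> forall eps, 0 < eps -> exists del, 0 < del /\
    forall y, A y -> dist2 x y < del -> dist2 (f x) (f y) < eps.

Definition unit01 (t : R) : Prop := 0 <= t <= 1.

Definition path_cont (g : R -> R2) : Prop :=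
  forall t, unit01 t -> forall eps, 0 < eps -> exists del, 0 < del /\
    forall s, unit01 s -> Rabs (t - s) < del -> dist2 (g t) (g s) < eps.

Definition rfun_cont01 (th : R -> R) : Prop :=
  forall t, unit01 t -> forall eps, 0 < eps -> exists del, 0 < del /\
    forall s, unit01 s -> Rabs (t - s) < del -> Rabs (th t - th s) < eps.

Definition compact2 (K : R2 -> Prop) : Prop :=
  forall C : (R2 -> Prop) -> Prop,
    (forall V, C V -> open2 V) ->
    (forall x, K x -> exists V, C V /\ V x) ->
    exists l : list (R2 -> Prop), Forall C l /\
      forall x, K x -> Exists (fun V => V x) l.

(** Orientation: winding number via a continuous angle lift. *)
Definition angle_lift (g : R -> R2) (c : R2) (th : R -> R) : Prop :=
  rfun_cont01 th /\
  forall t, unit01 t -> g t <> c /\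
    fst (g t) - fst c = dist2 (g t) c * cos (th t) /\
    snd (g t) - snd c = dist2 (g t) c * sin (th t).

Definition circ (x : R2) (eps t : R) : R2 :=
  (fst x + eps * cos (2 * PI * t), snd x + eps * sin (2 * PI * t)).

(** f has local degree +1 at every point: small counterclockwise circles
    around x are mapped to loops winding once counterclockwise around f x. *)
Definition orientation_preserving (f : R2 -> R2) : Prop :=
  forall x, exists r, 0 < r /\ forall eps, 0 < eps < r ->
    exists th, angle_lift (fun t => f (circ x eps t)) (f x) th /\
               th 1 - th 0 = 2 * PI.

Definition local_homeo (f : R2 -> R2) : Prop :=
  cont_on (fun _ => True) f /\
  forall x, exists (V W : R2 -> Prop) (g : R2 -> R2),
    V x /\ open2 V /\ open2 W /\
    (forall y, V y -> W (f y) /\ g (f y) = y) /\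
    (forall z, W z -> V (g z) /\ f (g z) = z) /\
    cont_on W g.

(** The disk Delta is modelled by R^2 (with its standard orientation),
    basepoint x0 = origin.  A planar surface is represented by a pointed
    orientation-preserving local homeomorphism (its developing map). *)
Definition planar (phi : R2 -> R2) : Prop :=
  local_homeo phi /\ orientation_preserving phi /\ phi orig = orig.

Definition PS : Type := { phi : R2 -> R2 | planar phi }.
Definition dev (P : PS) : R2 -> R2 := proj1_sig P.

Definition PC (A : R2 -> Prop) : Prop :=
  A orig /\
  forall x y, A x -> A y -> exists g : R -> R2,
    path_cont g /\ (forall t, unit01 t -> A (g t)) /\ g 0 = x /\ g 1 = y.

Definition closed_unit_disk (x : R2) : Prop := dist2 x orig <= 1.
Definition open_unit_disk (x : R2) : Prop := dist2 x orig < 1.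

Definition homeomorphic (D A : R2 -> Prop) : Prop :=
  exists f g : R2 -> R2,
    (forall x, D x -> A (f x) /\ g (f x) = x) /\
    (forall y, A y -> D (g y) /\ f (g y) = y) /\
    cont_on D f /\ cont_on A g.

Definition cdisk (K : R2 -> Prop) : Prop :=
  PC K /\ homeomorphic closed_unit_disk K /\ interior2 K orig.
Definition odisk (U : R2 -> Prop) : Prop :=
  PC U /\ homeomorphic open_unit_disk U.

Definition immersion (P : PS) (A : R2 -> Prop) (Q : PS) (B : R2 -> Prop)
  (iota : R2 -> R2) : Prop :=
  (forall x, A x -> B (iota x)) /\ cont_on A iota /\ iota orig = orig /\
  (forall x, A x -> dev Q (iota x) = dev P x).

Definition allQ (_ : R2) : Prop := True.

Definition immerses (P : PS) (A : R2 -> Prop) (Q : PS) : Prop :=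
  exists iota, immersion P A Q allQ iota.

Definition embeds (P : PS) (A : R2 -> Prop) (Q : PS) : Prop :=
  exists iota, immersion P A Q allQ iota /\
    (forall x y, A x -> A y -> iota x = iota y -> x = y).

(** coarsest topology containing a subbasis S: open sets are those that
    contain, around each of their points, a finite intersection of
    subbasic sets *)
Definition gen_open {X : Type} (S : (X -> Prop) -> Prop) (W : X -> Prop) : Prop :=
  forall x, W x -> exists l : list (X -> Prop),
    Forall S l /\ Forall (fun V => V x) l /\
    forall y, Forall (fun V => V y) l -> W y.

Definition subbasisM (W : PS -> Prop) : Prop :=
  (exists (P0 : PS) (K : R2 -> Prop), cdisk K /\
     forall P, W P <-> immerses P0 K P) \/
  (exists (P0 : PS) (U : R2 -> Prop), odisk U /\
     forall P, W P <-> ~ embeds P0 U P).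

Definition openM : (PS -> Prop) -> Prop := gen_open subbasisM.

Definition Eplus (P0 : PS) (K U : R2 -> Prop) (z : PS * R2) : Prop :=
  exists iota, immersion P0 K (fst z) allQ iota /\
    exists u, U u /\ iota u = snd z.

Definition subbasisE (W : PS * R2 -> Prop) : Prop :=
  (exists V, openM V /\ forall z, W z <-> V (fst z)) \/
  (exists (P0 : PS) (K U : R2 -> Prop),
     PC K /\ compact2 K /\ open2 U /\ (forall x, U x -> interior2 K x) /\
     forall z, W z <-> Eplus P0 K U z).

Definition openE : (PS * R2 -> Prop) -> Prop := gen_open subbasisE.

Definition Iset (Q : PS) (U : R2 -> Prop) (P : PS) : Prop := immerses Q U P.

From Stdlib Require Import Reals Lra List Classical.
Open Scope R_scope.

(** Since the topology on E is generated by a subbasis, it suffices to show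
    that each subbasic open set V containing (P, iota_P q) contains the image
    of a product neighbourhood of (P, q); such neighbourhoods are stable
    under finite intersection.  Sets pulled back from the moduli space are
    trivial.  For V = E_+(K, U0), with j : K ~> P and j u = iota_P q, take
    the neighbourhood {P' | B(R) ~> P'} of P for a large closed ball B(R):
    - for q' near q, a local section of dev_P0 near u produces u' in U0 with
      j u' = iota_P q' (local injectivity of dev_P);
    - an immersion k : B(R) ~> P' satisfies k o iota_P = iota_P' near q, by
      uniqueness of lifts of paths through the local homeomorphism dev_P';
    so k o j : K ~> P' witnesses (P', iota_P' q') in E_+(K, U0). *)

Lemma dist2_ge0 x y : 0 <= dist2 x y.
Proof. apply sqrt_pos. Qed.

Lemma dist2_sym x y : dist2 x y = dist2 y x.
Proof. unfold dist2; f_equal; ring. Qed.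

Lemma dist2_refl x : dist2 x x = 0.
Proof.
  unfold dist2. replace ((fst x - fst x) ^ 2 + (snd x - snd x) ^ 2) with 0 by ring.
  apply sqrt_0.
Qed.

Lemma dist2_eq0 x y : dist2 x y = 0 -> x = y.
Proof.
  destruct x as [a b], y as [c d]; unfold dist2; simpl; intro H.
  pose proof (pow2_ge_0 (a - c)); pose proof (pow2_ge_0 (b - d)).
  apply sqrt_eq_0 in H; [|lra].
  assert (Hac : (a - c) ^ 2 = 0) by lra. assert (Hbd : (b - d) ^ 2 = 0) by lra.
  rewrite <- Rsqr_pow2 in Hac, Hbd.
  apply Rsqr_0_uniq in Hac; apply Rsqr_0_uniq in Hbd.
  f_equal; lra.
Qed.

(** Cauchy–Schwarz in R^2, via Lagrange's identity
    (ac+bd)^2 + (ad-bc)^2 = (a^2+b^2)(c^2+d^2). *)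
Lemma cauchy_schwarz2 a b c d sa sc : 0 <= sa -> 0 <= sc ->
  sa * sa = a * a + b * b -> sc * sc = c * c + d * d -> a * c + b * d <= sa * sc.
Proof.
  intros Hsa Hsc Ha Hc.
  assert (Lagrange : (sa * sc) * (sa * sc)
                     = (a * c + b * d) * (a * c + b * d) + (a * d - b * c) * (a * d - b * c)).
  { replace ((sa * sc) * (sa * sc)) with ((sa * sa) * (sc * sc)) by ring.
    rewrite Ha, Hc; ring. }
  pose proof (Rle_0_sqr (a * d - b * c)). unfold Rsqr in *.
  assert (0 <= sa * sc) by nra.
  nra.
Qed.

Lemma dist2_tri x y z : dist2 x z <= dist2 x y + dist2 y z.
Proof.
  unfold dist2.
  set (a := fst x - fst y); set (b := snd x - snd y);
  set (c := fst y - fst z); set (d := snd y - snd z).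
  replace (fst x - fst z) with (a + c) by (unfold a, c; ring).
  replace (snd x - snd z) with (b + d) by (unfold b, d; ring).
  set (sa := sqrt (a ^ 2 + b ^ 2)); set (sc := sqrt (c ^ 2 + d ^ 2)).
  assert (Hsa : 0 <= sa) by apply sqrt_pos.
  assert (Hsc : 0 <= sc) by apply sqrt_pos.
  assert (Ha : sa * sa = a * a + b * b) by (unfold sa; rewrite sqrt_sqrt; nra).
  assert (Hc : sc * sc = c * c + d * d) by (unfold sc; rewrite sqrt_sqrt; nra).
  pose proof (cauchy_schwarz2 a b c d sa sc Hsa Hsc Ha Hc).
  rewrite <- (sqrt_square (sa + sc)) by lra.
  apply sqrt_le_1_alt. nra.
Qed.

Lemma dist2_lipschitz a b c : Rabs (dist2 a c - dist2 b c) <= dist2 a b.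
Proof.
  pose proof (dist2_tri a b c). pose proof (dist2_tri b a c).
  rewrite (dist2_sym b a) in *. unfold Rabs; destruct Rcase_abs; lra.
Qed.

Definition lin (x y : R2) (t : R) : R2 :=
  (fst x + t * (fst y - fst x), snd x + t * (snd y - snd x)).

Definition scal (c : R) (x : R2) : R2 := (c * fst x, c * snd x).

Lemma dist2_lin x y t s : dist2 (lin x y t) (lin x y s) = Rabs (t - s) * dist2 x y.
Proof.
  unfold dist2, lin; simpl.
  rewrite <- sqrt_Rsqr_abs, <- sqrt_mult_alt by apply Rle_0_sqr.
  f_equal. unfold Rsqr; ring.
Qed.

Lemma dist2_scal c x y : dist2 (scal c x) (scal c y) = Rabs c * dist2 x y.
Proof.
  unfold dist2, scal; simpl.
  rewrite <- sqrt_Rsqr_abs, <- sqrt_mult_alt by apply Rle_0_sqr.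
  f_equal. unfold Rsqr; ring.
Qed.

Lemma lin0 x y : lin x y 0 = x.
Proof. destruct x; unfold lin; simpl; f_equal; ring. Qed.

Lemma lin1 x y : lin x y 1 = y.
Proof. destruct x, y; unfold lin; simpl; f_equal; ring. Qed.

Lemma scal_orig c : scal c orig = orig.
Proof. unfold scal, orig; simpl; f_equal; ring. Qed.

Lemma dist2_lin_start x y t : unit01 t -> dist2 x (lin x y t) <= dist2 x y.
Proof.
  intros [H0 H1]. rewrite <- (lin0 x y) at 1. rewrite dist2_lin, Rabs_left1 by lra.
  pose proof (dist2_ge0 x y). nra.
Qed.

Lemma lin_norm x y t R : unit01 t -> dist2 x orig <= R -> dist2 y orig <= R ->
  dist2 (lin x y t) orig <= R.
Proof.
  intros [H0 H1] Hx Hy.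
  pose proof (dist2_tri (lin x y t) (scal t y) orig).
  assert (E1 : dist2 (lin x y t) (scal t y) = Rabs (1 - t) * dist2 x orig).
  { rewrite <- (scal_orig (1 - t)), <- dist2_scal. unfold dist2, lin, scal; simpl; f_equal; ring. }
  assert (E2 : dist2 (scal t y) orig = Rabs t * dist2 y orig).
  { rewrite <- dist2_scal, scal_orig; reflexivity. }
  rewrite Rabs_pos_eq in E1, E2 by lra.
  pose proof (dist2_ge0 x orig). pose proof (dist2_ge0 y orig). nra.
Qed.

Lemma path_lin x y : path_cont (lin x y).
Proof.
  intros t Ht eps He. pose proof (dist2_ge0 x y).
  exists (eps / (dist2 x y + 1)). split; [apply Rdiv_lt_0_compat; lra|].
  intros s Hs Hts. rewrite dist2_lin.
  apply (Rmult_lt_compat_r (dist2 x y + 1)) in Hts; [|lra].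
  unfold Rdiv in Hts. rewrite Rmult_assoc, Rinv_l, Rmult_1_r in Hts by lra.
  pose proof (Rabs_pos (t - s)). nra.
Qed.

Lemma cont_comp (A B : R2 -> Prop) f g : cont_on A f -> cont_on B g ->
  (forall x, A x -> B (f x)) -> cont_on A (fun x => g (f x)).
Proof.
  intros Hf Hg HAB x Ax eps He.
  destruct (Hg (f x) (HAB x Ax) eps He) as [d1 [Hd1 H1]].
  destruct (Hf x Ax d1 Hd1) as [d2 [Hd2 H2]].
  exists d2; split; auto.
Qed.

Lemma cont_on_mono (A B : R2 -> Prop) f : (forall x, A x -> B x) ->
  cont_on B f -> cont_on A f.
Proof.
  intros HAB Hf x Ax eps He. destruct (Hf x (HAB x Ax) eps He) as [d [Hd H]].
  exists d; split; auto.
Qed.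

Lemma path_comp (A : R2 -> Prop) g f : path_cont g -> (forall t, unit01 t -> A (g t)) ->
  cont_on A f -> path_cont (fun t => f (g t)).
Proof.
  intros Hg HA Hf t Ht eps He.
  destruct (Hf (g t) (HA t Ht) eps He) as [d1 [Hd1 H1]].
  destruct (Hg t Ht d1 Hd1) as [d2 [Hd2 H2]].
  exists d2; split; auto.
Qed.

(** The closed ball of radius R around the origin; for R > 0 it is a closed
    disk in the sense of [cdisk] (convex, hence in PC; a homothety of the unit
    disk; a neighbourhood of the origin).  These balls serve as test disks for
    the immersive topology. *)
Definition cball (R : R) (x : R2) : Prop := dist2 x orig <= R.

Lemma cont_scal (A : R2 -> Prop) c : cont_on A (scal c).
Proof.
  intros x _ eps He. exists (eps / (Rabs c + 1)). pose proof (Rabs_pos c).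
  split; [apply Rdiv_lt_0_compat; lra|].
  intros y _ Hy. rewrite dist2_scal.
  apply (Rmult_lt_compat_r (Rabs c + 1)) in Hy; [|lra].
  unfold Rdiv in Hy. rewrite Rmult_assoc, Rinv_l, Rmult_1_r in Hy by lra.
  pose proof (dist2_ge0 x y). nra.
Qed.

Lemma cball_homeomorphic R : 0 < R -> homeomorphic closed_unit_disk (cball R).
Proof.
  intros HR. assert (HiR : 0 < / R) by (apply Rinv_0_lt_compat; lra).
  exists (scal R), (scal (/ R)). unfold cball, closed_unit_disk.
  split; [|split; [|split; apply cont_scal]].
  - intros x Hx. rewrite <- (scal_orig R), dist2_scal, Rabs_pos_eq by lra. split; [nra|].
    destruct x; unfold scal; simpl; f_equal; field; lra.
  - intros y Hy. rewrite <- (scal_orig (/ R)), dist2_scal, Rabs_pos_eq by lra. split.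
    + apply (Rmult_le_reg_l R); [lra|]. rewrite <- Rmult_assoc, Rinv_r by lra. lra.
    + destruct y; unfold scal; simpl; f_equal; field; lra.
Qed.

Lemma cball_cdisk R : 0 < R -> cdisk (cball R).
Proof.
  intros HR. split; [|split; [apply cball_homeomorphic; exact HR|]].
  - split; [unfold cball; rewrite dist2_refl; lra|].
    intros x y Hx Hy. exists (lin x y). split; [apply path_lin|].
    split; [intros t Ht; apply lin_norm; auto | split; [apply lin0 | apply lin1]].
  - exists R. split; auto. intros y Hy. unfold cball. rewrite dist2_sym. lra.
Qed.

(** Paths are bounded: the continuous function t |-> |g t| attains a maximum on
    [0,1] (we extend it to R by clamping t into [0,1]). *)
Definition clamp (t : R) : R := Rmax 0 (Rmin 1 t).

Lemma clamp_unit t : unit01 (clamp t).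
Proof. unfold clamp, unit01, Rmax, Rmin; repeat destruct Rle_dec; lra. Qed.

Lemma clamp_id t : unit01 t -> clamp t = t.
Proof. unfold clamp, unit01, Rmax, Rmin; intros; repeat destruct Rle_dec; lra. Qed.

Lemma clamp_lipschitz t s : Rabs (clamp t - clamp s) <= Rabs (t - s).
Proof.
  unfold clamp, Rmax, Rmin; repeat destruct Rle_dec; unfold Rabs; repeat destruct Rcase_abs; lra.
Qed.

Lemma path_bound g : path_cont g -> exists M, forall t, unit01 t -> cball M (g t).
Proof.
  intros Hg.
  destruct (continuity_ab_maj (fun t => dist2 (g (clamp t)) orig) 0 1) as [Mx [HMx _]].
  - lra.
  - intros c Hc. unfold continuity_pt, continue_in, limit1_in, limit_in. intros eps He.
    destruct (Hg (clamp c) (clamp_unit c) eps He) as [d [Hd H]].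
    exists d; split; auto. intros x [_ Hx]. simpl in *. unfold Rdist in *.
    eapply Rle_lt_trans; [apply dist2_lipschitz|]. rewrite dist2_sym. apply H.
    + apply clamp_unit.
    + eapply Rle_lt_trans; [apply clamp_lipschitz|]. rewrite Rabs_minus_sym. exact Hx.
  - exists (dist2 (g (clamp Mx)) orig). intros t Ht. unfold cball.
    rewrite <- (clamp_id t Ht). apply HMx. exact Ht.
Qed.

(** Continuous images of compact sets are bounded: cover K by the open balls
    on which j oscillates by less than 1 and extract a finite subcover. *)
Lemma compact_bound (K : R2 -> Prop) j : compact2 K -> cont_on K j ->
  exists M, forall x, K x -> cball M (j x).
Proof.
  intros HK Hj.
  set (C := fun V : R2 -> Prop => exists x d, K x /\
     (forall y, K y -> dist2 x y < d -> dist2 (j x) (j y) < 1) /\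
     (forall y, V y <-> dist2 x y < d)).
  destruct (HK C) as [l [Hl Hcov]].
  - intros V [x [d [_ [_ HV]]]] y Hy. apply HV in Hy.
    exists (d - dist2 x y). split; [lra|]. intros z Hz. apply HV.
    pose proof (dist2_tri x y z). lra.
  - intros x Kx. destruct (Hj x Kx 1 Rlt_0_1) as [d [Hd H]].
    exists (fun y => dist2 x y < d). split; [exists x, d; repeat split; auto|].
    rewrite dist2_refl; exact Hd.
  - assert (Cover : forall l, Forall C l -> exists M, forall y, K y ->
                    Exists (fun V => V y) l -> cball M (j y)).
    { induction l0 as [|V l0 IH]; intros Hf.
      - exists 0. intros y _ He. inversion He.
      - inversion Hf as [|? ? [x [d [Kx [Hx HV]]]] Hf']; subst.
        destruct (IH Hf') as [M HM].
        exists (Rmax (dist2 (j x) orig + 1) M). intros y Ky He. unfold cball.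
        inversion He as [? ? Vy|? ? Hy]; subst.
        + apply HV in Vy. specialize (Hx y Ky Vy). rewrite dist2_sym in Hx.
          pose proof (dist2_tri (j y) (j x) orig).
          eapply Rle_trans; [|apply Rmax_l]. lra.
        + eapply Rle_trans; [|apply Rmax_r]. apply HM; auto. }
    destruct (Cover l Hl) as [M HM]. exists M. intros x Kx. apply HM; auto.
Qed.

Lemma local_homeo_locally_injective phi : local_homeo phi ->
  forall x, exists rho, 0 < rho /\
    forall y z, dist2 x y < rho -> dist2 x z < rho -> phi y = phi z -> y = z.
Proof.
  intros [_ Hloc] x.
  destruct (Hloc x) as [V [W [g [Vx [HoV [_ [HVg _]]]]]]].
  destruct (HoV x Vx) as [rho [Hrho Hball]].
  exists rho. split; [exact Hrho|]. intros y z Hy Hz E.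
  destruct (HVg y (Hball y Hy)) as [_ Ey]. destruct (HVg z (Hball z Hz)) as [_ Ez].
  rewrite <- Ey, <- Ez, E. reflexivity.
Qed.

Lemma local_homeo_local_section phi : local_homeo phi ->
  forall u eps, 0 < eps -> exists del, 0 < del /\
    forall z, dist2 (phi u) z < del -> exists u', dist2 u u' < eps /\ phi u' = z.
Proof.
  intros [_ Hloc] u eps Heps.
  destruct (Hloc u) as [V [W [g [Vu [_ [HoW [HVg [HWg Hgc]]]]]]]].
  destruct (HVg u Vu) as [Wu Egu].
  destruct (HoW _ Wu) as [rw [Hrw Hball]].
  destruct (Hgc _ Wu eps Heps) as [dg [Hdg Hg]].
  exists (Rmin rw dg). split; [apply Rmin_pos; auto|].
  intros z Hz. destruct (Rmin_Rgt_l _ _ _ Hz) as [Hzw Hzg].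
  assert (Wz : W z) by (apply Hball; exact Hzw).
  exists (g z). split.
  - rewrite <- Egu at 1. apply Hg; auto.
  - apply (HWg z Wz).
Qed.

Lemma paths_agree_at_limit (a b : R -> R2) T : path_cont a -> path_cont b ->
  0 < T <= 1 -> (forall s, 0 <= s < T -> a s = b s) -> a T = b T.
Proof.
  intros Ha Hb HT Hagree. apply NNPP. intros Hne.
  set (d := dist2 (a T) (b T)).
  assert (Hd : 0 < d).
  { destruct (dist2_ge0 (a T) (b T)) as [|E]; auto. exfalso; apply Hne, dist2_eq0; auto. }
  assert (HTu : unit01 T) by (split; lra).
  destruct (Ha T HTu (d / 2)) as [d1 [Hd1 H1]]; [lra|].
  destruct (Hb T HTu (d / 2)) as [d2 [Hd2 H2]]; [lra|].
  pose proof (Rmin_l d1 d2); pose proof (Rmin_r d1 d2); pose proof (Rmin_pos _ _ Hd1 Hd2).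
  set (s := Rmax 0 (T - Rmin d1 d2 / 2)).
  assert (Hs : 0 <= s < T) by (unfold s, Rmax; destruct Rle_dec; lra).
  assert (HTs : Rabs (T - s) < Rmin d1 d2).
  { unfold s, Rmax; destruct Rle_dec; rewrite Rabs_pos_eq; lra. }
  assert (Hsu : unit01 s) by (split; lra).
  specialize (H1 s Hsu ltac:(lra)). specialize (H2 s Hsu ltac:(lra)).
  rewrite (Hagree s Hs) in H1. rewrite dist2_sym in H2.
  pose proof (dist2_tri (a T) (b s) (b T)) as Htri. fold d in Htri. lra.
Qed.

(** Two lifts of the same path through a local homeomorphism which agree at
    time T keep agreeing for nearby times (local injectivity). *)
Lemma lifts_agree_near phi (a b : R -> R2) T : local_homeo phi ->
  path_cont a -> path_cont b -> (forall t, unit01 t -> phi (a t) = phi (b t)) ->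
  unit01 T -> a T = b T ->
  exists d, 0 < d /\ forall s, unit01 s -> Rabs (T - s) < d -> a s = b s.
Proof.
  intros Hphi Ha Hb Hab HT E.
  destruct (local_homeo_locally_injective phi Hphi (a T)) as [rho [Hrho Hinj]].
  destruct (Ha T HT rho Hrho) as [d1 [Hd1 H1]].
  destruct (Hb T HT rho Hrho) as [d2 [Hd2 H2]].
  exists (Rmin d1 d2). split; [apply Rmin_pos; auto|].
  intros s Hs Hts. destruct (Rmin_Rgt_l _ _ _ Hts).
  apply Hinj; [apply H1; auto | rewrite E; apply H2; auto | apply Hab; exact Hs].
Qed.

(** The
    set of times up to which they agree has a supremum T; they agree at T by
    [paths_agree_at_limit] and beyond T by [lifts_agree_near], so T = 1. *)
Lemma lift_unique phi (a b : R -> R2) : local_homeo phi ->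
  path_cont a -> path_cont b -> (forall t, unit01 t -> phi (a t) = phi (b t)) ->
  a 0 = b 0 -> a 1 = b 1.
Proof.
  intros Hphi Ha Hb Hab H0.
  set (S := fun t => 0 <= t <= 1 /\ forall s, 0 <= s <= t -> a s = b s).
  assert (HS0 : S 0).
  { split; [lra|]. intros s Hs. replace s with 0 by lra. exact H0. }
  assert (Hbd : bound S) by (exists 1; intros t [Ht _]; lra).
  destruct (completeness S Hbd (ex_intro _ 0 HS0)) as [T [HTub HTlub]].
  assert (HT : unit01 T).
  { split; [apply HTub; exact HS0 | apply HTlub; intros t [Ht _]; lra]. }
  assert (Before : forall s, 0 <= s < T -> a s = b s).
  { intros s Hs. destruct (classic (exists t, S t /\ s < t)) as [[t [[_ Ht] Hst]]|Hn].
    - apply Ht; lra.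
    - exfalso. assert (T <= s); [|lra]. apply HTlub. intros t Ht.
      destruct (Rle_dec t s); auto. exfalso; apply Hn; exists t; split; auto; lra. }
  assert (AtT : a T = b T).
  { destruct (Req_dec T 0) as [E|NE]; [rewrite E; exact H0|].
    apply paths_agree_at_limit; auto. destruct HT; lra. }
  destruct (lifts_agree_near phi a b T Hphi Ha Hb Hab HT AtT) as [d [Hd After]].
  set (t' := Rmin 1 (T + d / 2)).
  assert (Ht'1 : t' <= 1) by apply Rmin_l.
  assert (Ht'2 : t' <= T + d / 2) by apply Rmin_r.
  assert (St' : S t').
  { destruct HT. split; [unfold t', Rmin; destruct Rle_dec; lra|].
    intros s Hs. destruct (Rlt_dec s T); [apply Before; lra|].
    apply After; [split; lra | rewrite Rabs_left1; lra]. }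
  assert (t' <= T) by (apply HTub; exact St').
  assert (E1 : t' = 1).
  { destruct HT. unfold t', Rmin in *. destruct Rle_dec; lra. }
  apply (proj2 St'). lra.
Qed.

Lemma lifts_agree_along_path phi (A : R2 -> Prop) f g (gam : R -> R2) :
  local_homeo phi -> cont_on A f -> cont_on A g ->
  (forall x, A x -> phi (f x) = phi (g x)) ->
  path_cont gam -> (forall t, unit01 t -> A (gam t)) ->
  f (gam 0) = g (gam 0) -> f (gam 1) = g (gam 1).
Proof.
  intros Hphi Hf Hg Hfg Hgam HA H0.
  apply (lift_unique phi (fun t => f (gam t)) (fun t => g (gam t))); auto.
  - apply (path_comp A); auto.
  - apply (path_comp A); auto.
Qed.

Lemma dev_lh (P : PS) : local_homeo (dev P).
Proof. exact (proj1 (proj2_sig P)). Qed.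

Lemma interior2_mem (K : R2 -> Prop) x : interior2 K x -> K x.
Proof. intros [r [Hr HK]]. apply HK. rewrite dist2_refl. exact Hr. Qed.

Lemma openM_True : openM (fun _ => True).
Proof. intros x _. exists nil. repeat split; auto. Qed.

Lemma openM_inter (A B : PS -> Prop) : openM A -> openM B -> openM (fun x => A x /\ B x).
Proof.
  intros HA HB x [Ax Bx].
  destruct (HA x Ax) as [la [Hla [Hxa Hya]]].
  destruct (HB x Bx) as [lb [Hlb [Hxb Hyb]]].
  exists (la ++ lb). split; [apply Forall_app; auto|]. split; [apply Forall_app; auto|].
  intros y Hy. apply Forall_app in Hy. destruct Hy; auto.
Qed.

Lemma openM_sub (A : PS -> Prop) : subbasisM A -> openM A.
Proof.
  intros HA x Ax. exists (A :: nil). repeat split; auto.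
  intros y Hy. inversion Hy; auto.
Qed.

Lemma immersion_id (P : PS) (A : R2 -> Prop) : immersion P A P allQ (fun x => x).
Proof.
  split; [intros; exact I|]. split; [|split; auto].
  intros x _ eps He. exists eps; split; auto.
Qed.

Lemma immersion_comp (P0 P P' : PS) (K B : R2 -> Prop) j k :
  immersion P0 K P allQ j -> immersion P B P' allQ k -> (forall x, K x -> B (j x)) ->
  immersion P0 K P' allQ (fun x => k (j x)).
Proof.
  intros [_ [Hjc [Hj0 Hjd]]] [_ [Hkc [Hk0 Hkd]]] HKB.
  split; [intros; exact I|]. split; [apply (cont_comp K B); auto|]. split.
  - rewrite Hj0, Hk0. reflexivity.
  - intros x Kx. rewrite Hkd by auto. apply Hjd; exact Kx.
Qed.

(** Indeed
    dev_P0 u = dev_Q q; for q' near q a local section of dev_P0 gives u'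
    near u with dev_P0 u' = dev_Q q', and j u', i q' are two points near
    j u with the same image under dev_P, hence equal. *)
Lemma immersion_local_preimage (P0 Q P : PS) (K U0 U : R2 -> Prop) j i u q :
  immersion P0 K P allQ j -> immersion Q U P allQ i ->
  open2 U0 -> (forall x, U0 x -> K x) -> U0 u -> U q -> j u = i q ->
  exists r, 0 < r /\ forall q', U q' -> dist2 q q' < r -> exists u', U0 u' /\ j u' = i q'.
Proof.
  intros [_ [Hjc [_ Hjd]]] [_ [Hic [_ Hid]]] HoU0 HU0K U0u Uq Eji.
  assert (Ku : K u) by auto.
  assert (Hdev : dev P0 u = dev Q q) by (rewrite <- (Hjd u Ku), Eji; apply Hid; exact Uq).
  destruct (local_homeo_locally_injective _ (dev_lh P) (j u)) as [rho [Hrho Hinj]].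
  destruct (HoU0 u U0u) as [r0 [Hr0 Hr0b]].
  destruct (Hjc u Ku rho Hrho) as [dj [Hdj Hjb]].
  destruct (local_homeo_local_section _ (dev_lh P0) u (Rmin r0 dj)) as [del [Hdel Hsec]];
    [apply Rmin_pos; auto|].
  destruct (proj1 (dev_lh Q) q I del Hdel) as [dQ [HdQ HQb]].
  destruct (Hic q Uq rho Hrho) as [di [Hdi Hib]].
  exists (Rmin dQ di). split; [apply Rmin_pos; auto|].
  intros q' Uq' Hqq'. destruct (Rmin_Rgt_l _ _ _ Hqq') as [HqQ Hqi].
  destruct (Hsec (dev Q q')) as [u' [Hu' Eu']]; [rewrite Hdev; apply HQb; auto|].
  destruct (Rmin_Rgt_l _ _ _ Hu') as [Hu'0 Hu'j].
  assert (U0u' : U0 u') by auto.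
  exists u'. split; [exact U0u'|].
  apply Hinj; [apply Hjb; auto | rewrite Eji; apply Hib; auto |].
  rewrite (Hjd u' (HU0K u' U0u')), (Hid q' Uq'). exact Eu'.
Qed.

Section ImmersionMap.

Variables (Q : PS) (U : R2 -> Prop) (iota : PS -> R2 -> R2).
Hypothesis HPC : PC U.
Hypothesis HUopen : open2 U.
Hypothesis Hiota : forall P, Iset Q U P -> immersion Q U P allQ (iota P).

(** If k : B(R') ~> P' is an immersion of a ball of P, then k o iota_P and
    iota_P' agree at the end of any path in U along which iota_P stays in
    the ball, provided they agree at its start: both are lifts through
    dev_P' of dev_Q. *)
Lemma transport_along_path (P P' : PS) R' k (gam : R -> R2) :
  Iset Q U P -> Iset Q U P' -> immersion P (cball R') P' allQ k ->
  path_cont gam -> (forall t, unit01 t -> U (gam t) /\ cball R' (iota P (gam t))) ->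
  k (iota P (gam 0)) = iota P' (gam 0) -> k (iota P (gam 1)) = iota P' (gam 1).
Proof.
  intros HIP HIP' [_ [Hkc [_ Hkd]]] Hgam Hin H0.
  destruct (Hiota P HIP) as [_ [Hic [_ Hid]]].
  destruct (Hiota P' HIP') as [_ [Hic' [_ Hid']]].
  set (B := fun x => U x /\ cball R' (iota P x)).
  apply (lifts_agree_along_path (dev P') B (fun x => k (iota P x)) (iota P'));
    auto using dev_lh.
  - apply (cont_comp B (cball R')); [apply (cont_on_mono B U)|..];
      auto; intros x [? ?]; auto.
  - apply (cont_on_mono B U); auto. intros x [? ?]; auto.
  - intros x [Ux Bx]. rewrite Hkd, Hid, Hid'; auto.
Qed.

(** Any immersion k of a large enough ball of P satisfies
    k o iota_P = iota_P' near q: transport along a path in U from the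
    basepoint to q, then along the segment from q to q'. *)
Lemma transport_near (P : PS) q : Iset Q U P -> U q ->
  exists R r, 0 < r /\ forall R' P' k q', R <= R' -> Iset Q U P' ->
    immersion P (cball R') P' allQ k -> U q' -> dist2 q q' < r ->
    k (iota P q') = iota P' q'.
Proof.
  intros HIP Uq. pose proof (Hiota P HIP) as [_ [Hic [Hi0 _]]].
  destruct HPC as [U0 Hpath].
  destruct (Hpath orig q U0 Uq) as [gam [Hgam [HgU [Hg0 Hg1]]]].
  destruct (path_bound _ (path_comp U gam (iota P) Hgam HgU Hic)) as [M HM].
  destruct (HUopen q Uq) as [rU [HrU HrUb]].
  destruct (Hic q Uq 1 Rlt_0_1) as [di [Hdi Hib]].
  exists (Rmax M (dist2 (iota P q) orig + 1)), (Rmin rU di).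
  split; [apply Rmin_pos; auto|].
  intros R' P' k q' HR HIP' Hk Uq' Hqq'.
  pose proof (Rmax_l M (dist2 (iota P q) orig + 1)).
  pose proof (Rmax_r M (dist2 (iota P q) orig + 1)).
  destruct (Rmin_Rgt_l _ _ _ Hqq') as [HqU Hqi].
  assert (AtQ : k (iota P q) = iota P' q).
  { rewrite <- Hg1. apply (transport_along_path P P' R' k gam); auto.
    - intros t Ht. split; [auto|]. specialize (HM t Ht). unfold cball in *. lra.
    - destruct Hk as [_ [_ [Hk0 _]]]. destruct (Hiota P' HIP') as [_ [_ [Hi0' _]]].
      rewrite Hg0, Hi0, Hk0, Hi0'. reflexivity. }
  rewrite <- (lin1 q q'). apply (transport_along_path P P' R' k); auto using path_lin.
  - intros t Ht. pose proof (dist2_lin_start q q' t Ht).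
    assert (Useg : U (lin q q' t)) by (apply HrUb; lra).
    split; [exact Useg|].
    specialize (Hib _ Useg ltac:(lra)). rewrite dist2_sym in Hib.
    pose proof (dist2_tri (iota P (lin q q' t)) (iota P q) orig). unfold cball. lra.
  - rewrite lin0. exact AtQ.
Qed.

(** Continuity of I_U at (P, q)
    means that every open W containing I_U(P, q) is controlled. *)
Definition controls (P : PS) (q : R2) (W : PS * R2 -> Prop) : Prop :=
  exists A : PS -> Prop, openM A /\ A P /\ exists r, 0 < r /\
    forall P' q', Iset Q U P' -> U q' -> A P' -> dist2 q q' < r -> W (P', iota P' q').

Lemma controls_mono P q (W1 W2 : PS * R2 -> Prop) :
  (forall z, W1 z -> W2 z) -> controls P q W1 -> controls P q W2.
Proof.
  intros H12 [A [HA [AP [r [Hr Hctl]]]]].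
  exists A. repeat split; auto. exists r. split; auto.
Qed.

Lemma controls_Forall P q (l : list (PS * R2 -> Prop)) :
  Forall (controls P q) l -> controls P q (fun z => Forall (fun V => V z) l).
Proof.
  induction 1 as [|V l [A1 [HA1 [A1P [r1 [Hr1 H1]]]]] _ [A2 [HA2 [A2P [r2 [Hr2 H2]]]]]].
  - exists (fun _ => True). split; [apply openM_True|]. split; [exact I|].
    exists 1. split; [lra|]. intros. constructor.
  - exists (fun P' => A1 P' /\ A2 P'). split; [apply openM_inter; auto|]. split; [auto|].
    exists (Rmin r1 r2). split; [apply Rmin_pos; auto|].
    intros P' q' HIP' Uq' [A1P' A2P'] Hqq'. destruct (Rmin_Rgt_l _ _ _ Hqq').
    constructor; auto.
Qed.

(** Given j : K ~> P and u in
    U0 with j u = iota_P q, take A = {P' | B(R) ~> P'} for a ball B(R)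
    containing j(K) and large enough for [transport_near].  For P' in A with
    k : B(R) ~> P' and q' near q, [immersion_local_preimage] gives u' in U0
    with j u' = iota_P q', so k o j : K ~> P' and
    k (j u') = k (iota_P q') = iota_P' q'. *)
Lemma controls_Eplus (P0 P : PS) (K U0 : R2 -> Prop) q :
  compact2 K -> open2 U0 -> (forall x, U0 x -> interior2 K x) ->
  Iset Q U P -> U q -> Eplus P0 K U0 (P, iota P q) -> controls P q (Eplus P0 K U0).
Proof.
  intros HcK HoU0 HU0K HIP Uq [j [Hj [u [U0u Eju]]]]. simpl in Eju.
  destruct (immersion_local_preimage P0 Q P K U0 U j (iota P) u q Hj (Hiota P HIP)
              HoU0 (fun x Hx => interior2_mem K x (HU0K x Hx)) U0u Uq Eju)
    as [r1 [Hr1 Hpre]].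
  destruct (transport_near P q HIP Uq) as [R [r2 [Hr2 Htr]]].
  destruct (compact_bound K j HcK (proj1 (proj2 Hj))) as [M HM].
  set (R' := Rmax 1 (Rmax R M)).
  assert (HR' : 1 <= R' /\ R <= R' /\ M <= R').
  { unfold R'. pose proof (Rmax_l 1 (Rmax R M)). pose proof (Rmax_r 1 (Rmax R M)).
    pose proof (Rmax_l R M). pose proof (Rmax_r R M). lra. }
  exists (fun P' => immerses P (cball R') P'). split; [|split].
  - apply openM_sub. left. exists P, (cball R').
    split; [apply cball_cdisk; lra | tauto].
  - exists (fun x => x). apply immersion_id.
  - exists (Rmin r1 r2). split; [apply Rmin_pos; auto|].
    intros P' q' HIP' Uq' [k Hk] Hqq'. destruct (Rmin_Rgt_l _ _ _ Hqq') as [Hq1 Hq2].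
    destruct (Hpre q' Uq' Hq1) as [u' [U0u' Eu']].
    exists (fun x => k (j x)). split.
    + apply (immersion_comp P0 P P' K (cball R')); auto.
      intros x Kx. specialize (HM x Kx). unfold cball in *. lra.
    + exists u'. split; [exact U0u'|]. simpl. rewrite Eu'. apply (Htr R'); auto; lra.
Qed.

Lemma controls_subbasic V P q : subbasisE V ->
  Iset Q U P -> U q -> V (P, iota P q) -> controls P q V.
Proof.
  intros [[V0 [HV0 HVV]] | [P0 [K [U0 [_ [HcK [HoU0 [HU0K HVE]]]]]]]] HIP Uq HVP.
  - exists V0. split; [exact HV0|]. split; [apply HVV in HVP; exact HVP|].
    exists 1. split; [lra|]. intros. apply HVV; assumption.
  - apply (controls_mono P q (Eplus P0 K U0)); [intros z; apply HVE|].
    apply controls_Eplus; auto. apply HVE; exact HVP.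
Qed.

End ImmersionMap.

(** Main theorem: an open W of E is a union of finite intersections of
    subbasic sets, each of which is controlled. *)
Theorem mainTheorem8 :
  forall (Q : PS) (U : R2 -> Prop),
    PC U -> open2 U ->
    forall iota : PS -> R2 -> R2,
      (forall P, Iset Q U P -> immersion Q U P allQ (iota P)) ->
      (* continuity of I_U : I(U) x U -> E, (P,q) |-> (P, iota_P q) *)
      forall W : PS * R2 -> Prop, openE W ->
      forall (P : PS) (q : R2), Iset Q U P -> U q -> W (P, iota P q) ->
        exists A : PS -> Prop, openM A /\ A P /\
          exists r, 0 < r /\
            forall (P' : PS) (q' : R2), Iset Q U P' -> U q' -> A P' ->
              dist2 q q' < r -> W (P', iota P' q').
Proof.
  intros Q U HPC HUopen iota Hiota W HW P q HIP Uq HWP.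
  destruct (HW _ HWP) as [l [Hsub [Hin Hcov]]].
  apply (controls_mono Q U iota P q _ W Hcov).
  apply controls_Forall. rewrite Forall_forall in *. intros V HV.
  exact (controls_subbasic Q U iota HPC HUopen Hiota V P q (Hsub V HV) HIP Uq (Hin V HV)).
Qed.
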